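(* For any valued field $K$ the following are equivalent: (1) for every $d\ge 1$, every set $X\subseteq K^d$ that is closed under 2-element convex combinations (i.e. $\alpha x+\beta y\in X$ whenever $x,y\in X$, $\alpha,\beta\in\mathcal{O}$, $\alpha+\beta=1$) is convex; (2) the residue field $k$ is not isomorphic to $\mathbb{F}_2$.
   Context: $K$ is a field with a valuation $\nu:K\to\Gamma\cup\{\infty\}$, valuation ring $\mathcal{O}=\{x:\nu(x)\ge 0\}$, maximal ideal $\mathfrak{m}=\{x:\nu(x)>0\}$ and residue field $k=\mathcal{O}/\mathfrak{m}$. A set $X\subseteq K^d$ is convex if for every $n\ge 1$, all $x_1,\dots,x_n\in X$ and all $\alpha_1,\dots,\alpha_n\in\mathcal{O}$ with $\alpha_1+\dots+\alpha_n=1$, we have $\alpha_1x_1+\dots+\alpha_nx_n\in X$. *)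

From mathcomp Require Import all_boot all_order all_algebra.
Set Implicit Arguments. Unset Strict Implicit. Unset Printing Implicit Defensive.
Import GRing.Theory.
Local Open Scope ring_scope.

Record ordered_abelian_group (G : zmodType) (le : rel G) : Prop := {
  oag_refl : reflexive le;
  oag_antisym : antisymmetric le;
  oag_trans : transitive le;
  oag_total : total le;
  oag_add : forall x y z, le x y -> le (x + z) (y + z) }.

(* Gamma u {oo} is encoded as option G, with None = oo. *)
Definition oleq (G : zmodType) (le : rel G) (a b : option G) : bool :=
  match a, b with
  | _, None => true
  | None, Some _ => false
  | Some x, Some y => le x y
  end.

Definition oadd (G : zmodType) (a b : option G) : option G :=
  match a, b with
  | Some x, Some y => Some (x + y)
  | _, _ => None
  end.

Definition is_valuation (K : fieldType) (G : zmodType) (le : rel G)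
    (nu : K -> option G) : Prop :=
  (forall x, nu x = None <-> x = 0) /\
  (forall x y, nu (x * y) = oadd (nu x) (nu y)) /\
  (forall x y, oleq le (nu x) (nu (x + y)) || oleq le (nu y) (nu (x + y))).

Definition val_ring (K : fieldType) (G : zmodType) (le : rel G)
    (nu : K -> option G) (x : K) : Prop := oleq le (Some 0) (nu x).

Definition max_ideal (K : fieldType) (G : zmodType) (le : rel G)
    (nu : K -> option G) (x : K) : Prop :=
  oleq le (Some 0) (nu x) /\ nu x <> Some 0.

(* The residue field k = O/m is isomorphic to F_2: by the first isomorphism
   theorem, there is a surjective ring morphism O -> F_2 with kernel m. *)
Definition residue_field_iso_F2 (K : fieldType) (G : zmodType) (le : rel G)
    (nu : K -> option G) : Prop :=
  exists f : K -> 'F_2,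
    (forall x y, val_ring le nu x -> val_ring le nu y -> f (x + y) = f x + f y) /\
    (forall x y, val_ring le nu x -> val_ring le nu y -> f (x * y) = f x * f y) /\
    f 1 = 1 /\
    (forall x, val_ring le nu x -> (f x = 0 <-> max_ideal le nu x)) /\
    (forall z : 'F_2, exists x, val_ring le nu x /\ f x = z).

Definition vconvex (K : fieldType) (G : zmodType) (le : rel G)
    (nu : K -> option G) (d : nat) (X : 'rV[K]_d -> Prop) : Prop :=
  forall (n : nat) (x : 'I_n -> 'rV[K]_d) (a : 'I_n -> K),
    (1 <= n)%N -> (forall i, X (x i)) -> (forall i, val_ring le nu (a i)) ->
    \sum_(i < n) a i = 1 -> X (\sum_(i < n) a i *: x i).

Definition vconvex2 (K : fieldType) (G : zmodType) (le : rel G)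
    (nu : K -> option G) (d : nat) (X : 'rV[K]_d -> Prop) : Prop :=
  forall (x y : 'rV[K]_d) (a b : K),
    X x -> X y -> val_ring le nu a -> val_ring le nu b -> a + b = 1 ->
    X (a *: x + b *: y).

(* If the residue field has an element other than 0 and 1, it lifts to a unit
   t of O such that 1 - t is a unit too. An (n+2)-point convex combination
   then splits as a 2-point combination, with weights t and 1 - t, of a
   2-point combination and an (n+1)-point combination, all of whose weights
   stay in O because we only divide by t and 1 - t.
   If k = F_2, the residues of the weights of a 2-point combination are 0 and 1
   in some order, so the residue vector of the combination is the residue vector
   of one of the two points. Hence the points of O^2 whose residue vector is not
   (1, 1) form a set closed under 2-point combinations, yet it contains
   (1, 0), (0, 1) and (0, 0), and (1, 1) = (1, 0) + (0, 1) - (0, 0). *)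

From mathcomp Require Import all_boot all_order all_algebra.
From Stdlib Require Import Classical ClassicalEpsilon.
From mathcomp Require Import ring.

Set Implicit Arguments.
Unset Strict Implicit.
Unset Printing Implicit Defensive.
Import GRing.Theory.
Local Open Scope ring_scope.

Lemma F2_cases (z : 'F_2) : z = 0 \/ z = 1.
Proof. by case: z => [[|[|n]]] //= Hz; [left|right]; apply/val_inj. Qed.

Lemma F2_add_iff (a b c : 'F_2) : (c = 0 <-> (a = 0 <-> b = 0)) -> c = a + b.
Proof.
have F10 : (1 : 'F_2) <> 0 by [].
have F11 : (1 + 1 : 'F_2) = 0 by apply/val_inj.
by case: (F2_cases a) (F2_cases b) (F2_cases c) => -> [] -> [] ->;
  rewrite ?addr0 ?add0r ?F11; intuition.
Qed.

Lemma F2_mul_iff (a b c : 'F_2) : (c = 0 <-> a = 0 \/ b = 0) -> c = a * b.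
Proof.
have F10 : (1 : 'F_2) <> 0 by [].
by case: (F2_cases a) (F2_cases b) (F2_cases c) => -> [] -> [] ->;
  rewrite ?mulr0 ?mul0r ?mulr1; intuition.
Qed.

Section ConvexCombinationSplit.

Variables (K : fieldType) (V : lmodType K).

Definition tail_weights n (a : 'I_n.+2 -> K) (t : K) (i : 'I_n.+1) : K :=
  (if i == ord0 then a ord0 + a (lift ord0 ord0) - t else a (lift ord0 i))
    / (1 - t).

Lemma sum_tail_weights n (a : 'I_n.+2 -> K) t :
  1 - t != 0 -> \sum_(i < n.+2) a i = 1 -> \sum_i tail_weights a t i = 1.
Proof.
move=> t1 sa; rewrite /tail_weights -big_distrl big_ord_recl /=.
move: sa; rewrite !big_ord_recl => sa.
suff -> : a ord0 + a (lift ord0 ord0) - t +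
    \sum_(i < n) a (lift ord0 (lift ord0 i)) = 1 - t by rewrite divff.
by rewrite -sa; ring.
Qed.

Lemma convex_comb_split n (a : 'I_n.+2 -> K) (x : 'I_n.+2 -> V) t :
  t != 0 -> 1 - t != 0 ->
  \sum_(i < n.+2) a i *: x i =
    t *: (a ord0 / t *: x ord0 + (1 - a ord0 / t) *: x (lift ord0 ord0)) +
    (1 - t) *: \sum_(i < n.+1) tail_weights a t i *: x (lift ord0 i).
Proof.
move=> t0 t1.
have mulK c : (1 - t) * (c / (1 - t)) = c by rewrite mulrC divfK.
have e0 : t * (a ord0 / t) = a ord0 by rewrite mulrC divfK.
rewrite big_ord_recl [in RHS]big_ord_recl big_ord_recl /tail_weights /=.
rewrite !scalerDr scaler_sumr !scalerA mulK e0 mulrBr mulr1 e0.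
under [in RHS]eq_bigr => i _ do rewrite scalerA mulK.
rewrite !addrA; congr (_ + _); rewrite -addrA -scalerDl; congr (_ + _ *: _).
by ring.
Qed.

End ConvexCombinationSplit.

Section Valuation.

Variables (K : fieldType) (G : zmodType) (le : rel G) (nu : K -> option G).
Hypotheses (Hg : ordered_abelian_group le) (Hv : is_valuation le nu).

Lemma oleq_refl a : oleq le a a.
Proof. by case: a => //= a; apply: (oag_refl Hg). Qed.

Lemma oleq_trans : transitive (oleq le).
Proof. by move=> [b|] [a|] [c|] //=; apply: (oag_trans Hg). Qed.

Lemma oleq_anti a b : oleq le a b -> oleq le b a -> a = b.
Proof.
case: a b => [a|] [b|] //= ab ba.
by congr Some; apply: (oag_antisym Hg); rewrite ab.
Qed.

Lemma le_addl a b : le 0 a -> le b (a + b).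
Proof. by move=> a0; have := oag_add Hg b a0; rewrite add0r. Qed.

Lemma nu_eqNone x : nu x = None <-> x = 0.
Proof. by case: Hv. Qed.

Lemma nuM x y : nu (x * y) = oadd (nu x) (nu y).
Proof. by case: Hv => _ []. Qed.

Lemma nuD x y : oleq le (nu x) (nu (x + y)) || oleq le (nu y) (nu (x + y)).
Proof. by case: Hv => _ []. Qed.

Lemma nu0 : nu 0 = None.
Proof. exact/nu_eqNone. Qed.

Lemma nu_unit_neq0 x : nu x = Some 0 -> x != 0.
Proof. by move=> ux; apply/eqP => /nu_eqNone; rewrite ux. Qed.

Lemma nu1 : nu 1 = Some 0.
Proof.
have := nuM 1 1; rewrite mulr1.
case E: (nu 1) => [g|]; last by move/nu_eqNone/eqP: E; rewrite oner_eq0.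
by move=> /= [gg]; congr Some; apply: (addIr g); rewrite add0r.
Qed.

Lemma nuN1 : nu (-1) = Some 0.
Proof.
have := nuM (-1) (-1); rewrite mulrNN mulr1 nu1.
case: (nu (-1)) => [h|] //= [hh]; congr Some.
case/orP: (oag_total Hg h 0) => hle; have := oag_add Hg h hle;
  rewrite -hh add0r => hle'; apply: (oag_antisym Hg); by rewrite hle hle'.
Qed.

Lemma nuN x : nu (- x) = nu x.
Proof. by rewrite -mulN1r nuM nuN1; case: (nu x) => //= g; rewrite add0r. Qed.

Lemma nuV x : nu x = Some 0 -> nu x^-1 = Some 0.
Proof.
move=> ux; have := nuM x x^-1; rewrite mulfV ?nu_unit_neq0 // nu1 ux.
by case: (nu x^-1) => [g|] //= [->]; rewrite add0r.
Qed.

Lemma val_ring0 : val_ring le nu 0.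
Proof. by rewrite /val_ring nu0. Qed.

Lemma val_ring_unit x : nu x = Some 0 -> val_ring le nu x.
Proof. by rewrite /val_ring => ->; apply: oleq_refl. Qed.

Lemma val_ring1 : val_ring le nu 1.
Proof. exact/val_ring_unit/nu1. Qed.

Lemma val_ringN x : val_ring le nu (- x) <-> val_ring le nu x.
Proof. by rewrite /val_ring nuN. Qed.

Lemma val_ringD x y :
  val_ring le nu x -> val_ring le nu y -> val_ring le nu (x + y).
Proof.
move=> Ox Oy.
by case/orP: (nuD x y); [apply: oleq_trans Ox | apply: oleq_trans Oy].
Qed.

Lemma val_ringB x y :
  val_ring le nu x -> val_ring le nu y -> val_ring le nu (x - y).
Proof. by move=> Ox Oy; apply: val_ringD => //; apply/val_ringN. Qed.

Lemma val_ringM x y :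
  val_ring le nu x -> val_ring le nu y -> val_ring le nu (x * y).
Proof.
rewrite /val_ring nuM; case: (nu x) => [a|] //; case: (nu y) => [b|] //= a0 b0.
exact: oag_trans b0 (le_addl _ a0).
Qed.

Lemma val_ring_divr x t :
  val_ring le nu x -> nu t = Some 0 -> val_ring le nu (x / t).
Proof. by move=> Ox ut; apply: val_ringM Ox (val_ring_unit (nuV ut)). Qed.

Lemma max_ideal0 : max_ideal le nu 0.
Proof. by rewrite /max_ideal nu0. Qed.

Lemma max_ideal1 : ~ max_ideal le nu 1.
Proof. by rewrite /max_ideal nu1 => -[]. Qed.

Lemma max_idealN x : max_ideal le nu (- x) <-> max_ideal le nu x.
Proof. by rewrite /max_ideal nuN. Qed.

Lemma max_idealD x y :
  max_ideal le nu x -> max_ideal le nu y -> max_ideal le nu (x + y).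
Proof.
move=> [Ox nx] [Oy ny]; split; first exact: val_ringD.
by move=> E; case/orP: (nuD x y); rewrite E => h;
  [apply: nx | apply: ny]; apply: oleq_anti.
Qed.

Lemma max_idealB x y :
  max_ideal le nu x -> max_ideal le nu y -> max_ideal le nu (x - y).
Proof. by move=> mx my; apply: max_idealD => //; apply/max_idealN. Qed.

Lemma max_idealDKl x y :
  max_ideal le nu (x + y) -> max_ideal le nu x -> max_ideal le nu y.
Proof.
move=> mxy mx; rewrite -(addKr x y).
by apply: max_idealD => //; apply/max_idealN.
Qed.

Lemma max_idealMr x y :
  max_ideal le nu x -> val_ring le nu y -> max_ideal le nu (x * y).
Proof.
rewrite /max_ideal /val_ring nuM.
case: (nu x) => [a|] //; case: (nu y) => [b|] //= [a0 na] b0; split.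
  exact: oag_trans b0 (le_addl _ a0).
move=> [ab0]; apply: na; congr Some; apply: (oag_antisym Hg); rewrite a0 andbT.
by have := le_addl a b0; rewrite addrC ab0.
Qed.

Lemma nu_unitP x :
  nu x = Some 0 <-> val_ring le nu x /\ ~ max_ideal le nu x.
Proof.
split=> [ux | [Ox nmx]]; first by split; [apply: val_ring_unit | case=> _].
by case: (nu x =P Some 0) => // nx; case: nmx.
Qed.

Lemma max_idealM_iff x y : val_ring le nu x -> val_ring le nu y ->
  max_ideal le nu (x * y) <-> max_ideal le nu x \/ max_ideal le nu y.
Proof.
move=> Ox Oy; split=> [mxy | [mx | my]]; last 2 first.
- exact: max_idealMr.
- by rewrite mulrC; apply: max_idealMr.
apply: NNPP => /not_or_and [nmx nmy].
have uxy : nu (x * y) = Some 0.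
  by rewrite nuM !(proj2 (nu_unitP _)) //= addr0.
by move/nu_unitP: uxy => [_ []].
Qed.

Section ResidueF2.

Hypothesis max_ideal_compl : forall x,
  val_ring le nu x -> ~ max_ideal le nu x -> max_ideal le nu (1 - x).

Lemma max_idealD_iff x y : val_ring le nu x -> val_ring le nu y ->
  max_ideal le nu (x + y) <-> (max_ideal le nu x <-> max_ideal le nu y).
Proof.
move=> Ox Oy; case: (classic (max_ideal le nu x)) => mx;
  case: (classic (max_ideal le nu y)) => my.
- by split=> // _; apply: max_idealD.
- by split=> [/max_idealDKl/(_ mx) | [/(_ mx)]].
- by split=> [| [_ /(_ my)]] //; rewrite addrC => /max_idealDKl/(_ my).
- split=> // _.
  (* -1 is a unit, so the hypothesis gives 2 = 1 - (-1) in m *)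
  have m2 : max_ideal le nu (1 - (-1)).
    apply: max_ideal_compl; first exact/val_ringN/val_ring1.
    by move/max_idealN/max_ideal1.
  have -> : x + y = (1 - (-1)) - (1 - x) - (1 - y) by ring.
  by apply: max_idealB; [apply: max_idealB m2 _|]; apply: max_ideal_compl.
Qed.

Definition residue_F2 x : 'F_2 :=
  if excluded_middle_informative (max_ideal le nu x) then 0 else 1.

Lemma residue_F2_eq0 x : residue_F2 x = 0 <-> max_ideal le nu x.
Proof. by rewrite /residue_F2; case: excluded_middle_informative. Qed.

Lemma residue_F2_eq1 x : ~ max_ideal le nu x -> residue_F2 x = 1.
Proof. by rewrite /residue_F2; case: excluded_middle_informative. Qed.

Lemma residue_F2_iso : residue_field_iso_F2 le nu.
Proof.
exists residue_F2; split; last split; last split; last split.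
- move=> x y Ox Oy; apply: F2_add_iff; rewrite !residue_F2_eq0.
  exact: max_idealD_iff.
- move=> x y Ox Oy; apply: F2_mul_iff; rewrite !residue_F2_eq0.
  exact: max_idealM_iff.
- exact/residue_F2_eq1/max_ideal1.
- by move=> x _; apply: residue_F2_eq0.
- move=> z; case: (F2_cases z) => ->.
    by exists 0; split; [apply: val_ring0 | apply/residue_F2_eq0/max_ideal0].
  by exists 1; split; [apply: val_ring1 | apply/residue_F2_eq1/max_ideal1].
Qed.

End ResidueF2.

Lemma exists_unit_compl_unit : ~ residue_field_iso_F2 le nu ->
  exists t, nu t = Some 0 /\ nu (1 - t) = Some 0.
Proof.
move=> nk; apply: NNPP => nt; apply/nk/residue_F2_iso => x Ox nmx.
apply: NNPP => nm; apply: nt; exists x; split; apply/nu_unitP => //.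
by split=> //; apply: val_ringB Ox; apply: val_ring1.
Qed.

Section ConvexFromUnit.

Variable t : K.
Hypotheses (ut : nu t = Some 0) (ut1 : nu (1 - t) = Some 0).

Lemma vconvex_of_vconvex2 d (X : 'rV[K]_d -> Prop) :
  vconvex2 le nu X -> vconvex le nu X.
Proof.
move=> X2 [//|n]; elim: n => [|n IH] x a _ Xx Oa sa.
  by move: sa; rewrite !big_ord1 => ->; rewrite scale1r.
have t1 : t + (1 - t) = 1 by rewrite addrC subrK.
rewrite (convex_comb_split _ _ (nu_unit_neq0 ut) (nu_unit_neq0 ut1)).
apply: (X2 _ _ _ _ _ _ (val_ring_unit ut) (val_ring_unit ut1) t1).
- apply: X2 => //; first exact: val_ring_divr.
    by apply: val_ringB val_ring1 (val_ring_divr _ ut).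
  by rewrite addrC subrK.
- apply: IH => //; last exact: sum_tail_weights (nu_unit_neq0 ut1) sa.
  move=> i; apply: val_ring_divr ut1; case: ifP => _ //.
  by apply: val_ringB (val_ring_unit ut); apply: val_ringD.
Qed.

End ConvexFromUnit.

Section ResidueMapToF2.

Variable f : K -> 'F_2.
Hypotheses
  (fD : forall x y, val_ring le nu x -> val_ring le nu y ->
     f (x + y) = f x + f y)
  (fM : forall x y, val_ring le nu x -> val_ring le nu y ->
     f (x * y) = f x * f y)
  (f1 : f 1 = 1).

Definition has_zero_residue d (v : 'rV[K]_d) : Prop :=
  (forall j, val_ring le nu (v 0 j)) /\ exists j, f (v 0 j) = 0.

Lemma vconvex2_has_zero_residue d : vconvex2 le nu (@has_zero_residue d).
Proof.
move=> v w a b [Ov [j vj]] [Ow [k wk]] Oa Ob ab1.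
have fab : f a + f b = 1 by rewrite -fD // ab1.
have fcomb i : f ((a *: v + b *: w) 0 i) = f a * f (v 0 i) + f b * f (w 0 i).
  by rewrite !mxE fD ?fM //; apply: val_ringM.
split=> [i | ]; first by rewrite !mxE; apply: val_ringD; apply: val_ringM.
case: (F2_cases (f a)) => fa.
  by exists k; rewrite fcomb wk fa mul0r mulr0 addr0.
have fb : f b = 0 by apply: (@addrI _ 1); rewrite addr0 -{1}fa fab.
by exists j; rewrite fcomb vj fb mul0r mulr0 addr0.
Qed.

Lemma not_vconvex_has_zero_residue : ~ vconvex le nu (@has_zero_residue 2).
Proof.
pose x (i : 'I_3) : 'rV[K]_2 := \row_j (i == j :> nat)%:R.
pose a (i : 'I_3) : K := if i == 2 :> nat then -1 else 1.
have comb1 j : (\sum_i a i *: x i) 0 j = 1.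
  rewrite summxE !big_ord_recl big_ord0 !mxE /a /=.
  by case: j => [[|[|//]] ?] /=; ring.
move=> /(_ 3 x a isT) []; last by move=> _ [j]; rewrite comb1 f1.
- move=> i; split=> [j | ].
    by rewrite mxE; case: (_ == _); [apply: val_ring1 | apply: val_ring0].
  have f0 : f 0 = 0.
    by apply: (@addrI _ (f 0)); rewrite -fD ?addr0 //; apply: val_ring0.
  exists (if i == 0 :> nat then ord_max else ord0); rewrite mxE.
  by case: i => [[|[|[|//]]] ?].
- by move=> i; rewrite /a; case: ifP => _; [apply/val_ringN|]; apply: val_ring1.
- by rewrite !big_ord_recl big_ord0 /a /=; ring.
Qed.

End ResidueMapToF2.

Lemma residue_iso_F2_not_vconvex : residue_field_iso_F2 le nu ->
  exists X : 'rV[K]_2 -> Prop, vconvex2 le nu X /\ ~ vconvex le nu X.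
Proof.
case=> f [fD [fM [f1 _]]]; exists (has_zero_residue f (d:=2)).
split; first exact: vconvex2_has_zero_residue.
exact: not_vconvex_has_zero_residue.
Qed.

End Valuation.

Theorem proposition2p6 (K : fieldType) (G : zmodType) (le : rel G)
    (nu : K -> option G) :
  ordered_abelian_group le -> is_valuation le nu ->
  ((forall (d : nat), (1 <= d)%N -> forall X : 'rV[K]_d -> Prop,
      vconvex2 le nu X -> vconvex le nu X)
   <-> ~ residue_field_iso_F2 le nu).
Proof.
move=> Hg Hv; split=> [conv kF2 | nkF2 d _ X].
  have [X [X2 nX]] := residue_iso_F2_not_vconvex Hg Hv kF2.
  exact: nX (conv 2 isT X X2).
have [t [ut ut1]] := exists_unit_compl_unit Hg Hv nkF2.
exact: (@vconvex_of_vconvex2 _ _ _ _ Hg Hv _ ut ut1 d X).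
Qed.
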